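(* Let $a>0$ and let $L_2=a\mathbb{Z}^3\cup a(\mathbb{Z}+\tfrac12)^3\cup W$. Then $$\sup_{x\in\mathbb{R}^3}\ \min_{p\in L_2}|x-p|=\frac{5\sqrt3}{24}a ,$$ and the set of points $x$ where this supremum is attained is exactly $$\Lambda=\Big\{p+\tfrac{5a}{24}(s_1,s_2,s_3):\ p\in a\mathbb{Z}^3\cup a(\mathbb{Z}+\tfrac12)^3,\ s_1,s_2,s_3\in\{-1,1\}\Big\}.$$ For example, $(5a/24,5a/24,5a/24)$ has exactly seven nearest points in $L_2$ at this distance: the origin and the six points $(0,a/4,a/2)$, $(0,a/2,a/4)$, $(a/4,a/2,0)$, $(a/2,a/4,0)$, $(a/4,0,a/2)$, $(a/2,0,a/4)$ of $W$.
   Context: Fix $a>0$. $W\subset\mathbb{R}^3$ is the set of all points $a(u_1,u_2,u_3)$ such that $(u_1,u_2,u_3)$ is a permutation of a triple $(i,\ j+\tfrac12,\ k+\varepsilon)$ with $i,j,k\in\mathbb{Z}$ and $\varepsilon\in\{\tfrac14,\tfrac34\}$. $|\cdot|$ is the Euclidean norm. *)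

From Stdlib Require Import Reals.
Open Scope R_scope.

Definition pt : Type := (R * R * R)%type.

Definition mkpt (x y z : R) : pt := (x, y, z).

Definition dist3 (x p : pt) : R :=
  match x, p with
  | (x1, x2, x3), (p1, p2, p3) =>
      sqrt ((x1 - p1) ^ 2 + (x2 - p2) ^ 2 + (x3 - p3) ^ 2)
  end.


Definition latZ3 (a : R) (p : pt) : Prop :=
  exists i j k : Z, p = mkpt (a * IZR i) (a * IZR j) (a * IZR k).

Definition latZ3half (a : R) (p : pt) : Prop :=
  exists i j k : Z,
    p = mkpt (a * (IZR i + /2)) (a * (IZR j + /2)) (a * (IZR k + /2)).

Definition is_perm3 (u1 u2 u3 v1 v2 v3 : R) : Prop :=
  (u1 = v1 /\ u2 = v2 /\ u3 = v3) \/
  (u1 = v1 /\ u2 = v3 /\ u3 = v2) \/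
  (u1 = v2 /\ u2 = v1 /\ u3 = v3) \/
  (u1 = v2 /\ u2 = v3 /\ u3 = v1) \/
  (u1 = v3 /\ u2 = v1 /\ u3 = v2) \/
  (u1 = v3 /\ u2 = v2 /\ u3 = v1).

Definition setW (a : R) (p : pt) : Prop :=
  exists (u1 u2 u3 : R) (i j k : Z) (eps : R),
    (eps = /4 \/ eps = 3/4) /\
    is_perm3 u1 u2 u3 (IZR i) (IZR j + /2) (IZR k + eps) /\
    p = mkpt (a * u1) (a * u2) (a * u3).

Definition L2 (a : R) (p : pt) : Prop :=
  latZ3 a p \/ latZ3half a p \/ setW a p.

Definition is_min_dist (a : R) (x : pt) (d : R) : Prop :=
  (exists p, L2 a p /\ dist3 x p = d) /\
  (forall p, L2 a p -> d <= dist3 x p).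

Definition is_sign (s : R) : Prop := s = 1 \/ s = -1.

Definition Lambda (a : R) (x : pt) : Prop :=
  exists (p1 p2 p3 s1 s2 s3 : R),
    (latZ3 a (mkpt p1 p2 p3) \/ latZ3half a (mkpt p1 p2 p3)) /\
    is_sign s1 /\ is_sign s2 /\ is_sign s3 /\
    x = mkpt (p1 + 5 * a / 24 * s1) (p2 + 5 * a / 24 * s2) (p3 + 5 * a / 24 * s3).

(* Everything is reduced to the unit configuration a = 1: a point lies in
   L2 a iff it is a times a point of the set Q of triples whose coordinate
   classes (integer I, half-integer H, quarter-integer F = Z±1/4) follow one
   of the patterns III, HHH or a permutation of IHF; distances scale by a.
   The squared covering radius of Q is rho = 75/576 = (5√3/24)^2.

   1. Q and the unit deep-hole set Λ are invariant under permuting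
      coordinates and under t ↦ t + m, t ↦ m - t (m ∈ Z) in each
      coordinate; these maps preserve squared distances to Q.
   2. Hence it suffices to study 0 ≤ y1 ≤ y2 ≤ y3 ≤ 1/2.  There one of
      0, (1/2,1/2,1/2), (0,1/4,1/2) is within squared distance rho, and
      equality forces y = (5/24)^3 or y = (1/2 - 5/24)^3, i.e. y ∈ Λ.
   3. Conversely every point of Λ is at squared distance ≥ rho from Q,
      by a coordinatewise distance-to-Z estimate.
   4. Nearest points of Q exist (nearest point in each coordinate class),
      so the minimum distance is attained.
   The theorem follows by scaling; the example is a finite classification
   of the points of Q at squared distance rho from (5/24,5/24,5/24). *)

From Stdlib Require Import Reals Lra Lia Psatz ZArith.
Open Scope R_scope.

Ltac push_IZR := repeat rewrite ?plus_IZR, ?minus_IZR, ?opp_IZR, ?mult_IZR.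

Definition is_int (t : R) : Prop := exists k : Z, t = IZR k.
Definition is_half (t : R) : Prop := exists k : Z, t = IZR k + /2.
Definition is_quarter (t : R) : Prop := exists k : Z, t = IZR k + /4 \/ t = IZR k + 3/4.

Definition pattern (X1 X2 X3 : R -> Prop) (q1 q2 q3 : R) : Prop :=
  X1 q1 /\ X2 q2 /\ X3 q3.

Definition unitL2 (q1 q2 q3 : R) : Prop :=
  pattern is_int is_int is_int q1 q2 q3 \/ pattern is_half is_half is_half q1 q2 q3 \/
  pattern is_int is_half is_quarter q1 q2 q3 \/ pattern is_int is_quarter is_half q1 q2 q3 \/
  pattern is_half is_int is_quarter q1 q2 q3 \/ pattern is_half is_quarter is_int q1 q2 q3 \/
  pattern is_quarter is_int is_half q1 q2 q3 \/ pattern is_quarter is_half is_int q1 q2 q3.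

Definition sqdist (y1 y2 y3 q1 q2 q3 : R) : R :=
  (y1 - q1)^2 + (y2 - q2)^2 + (y3 - q3)^2.

(* The squared covering radius (5√3/24)^2. *)
Definition rho : R := 75/576.

Definition unitLambda (y1 y2 y3 : R) : Prop :=
  exists p1 p2 p3 s1 s2 s3,
    ((is_int p1 /\ is_int p2 /\ is_int p3) \/ (is_half p1 /\ is_half p2 /\ is_half p3)) /\
    is_sign s1 /\ is_sign s2 /\ is_sign s3 /\
    y1 = p1 + 5/24*s1 /\ y2 = p2 + 5/24*s2 /\ y3 = p3 + 5/24*s3.

Ltac destruct_unitL2 H := unfold unitL2, pattern in H; decompose [or and] H; clear H.

Lemma sqdist_ge0 y1 y2 y3 q1 q2 q3 : 0 <= sqdist y1 y2 y3 q1 q2 q3.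
Proof. unfold sqdist; pose proof (pow2_ge_0 (y1 - q1)); pose proof (pow2_ge_0 (y2 - q2));
  pose proof (pow2_ge_0 (y3 - q3)); lra. Qed.

Lemma nearest_int_sq x (j n : Z) :
  -/2 <= x - IZR j <= /2 -> (x - IZR j)^2 <= (x - IZR n)^2.
Proof.
  intros Hj. destruct (Z.lt_trichotomy n j) as [h|[->|h]]; [| lra |].
  - assert (IZR n <= IZR j - 1) by (rewrite <- minus_IZR; apply IZR_le; lia). nra.
  - assert (IZR j + 1 <= IZR n) by (rewrite <- plus_IZR; apply IZR_le; lia). nra.
Qed.

Lemma int_within_half x : exists j : Z, -/2 <= x - IZR j <= /2.
Proof.
  destruct (archimed x) as [H1 H2].
  destruct (Rle_dec (x - (IZR (up x) - 1)) (/2)).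
  - exists (up x - 1)%Z; push_IZR; simpl; lra.
  - exists (up x); lra.
Qed.

Lemma gap_sq_ge (e b : R) (n : Z) :
  -/2 <= e - IZR n <= /2 -> b <= (e - IZR n)^2 -> b <= e^2.
Proof. intros H Hb. pose proof (nearest_int_sq e n 0 H). simpl in *. lra. Qed.

Definition coord_sym (t z : R) : Prop := exists m : Z, z = t + IZR m \/ z = IZR m - t.

(* Coordinate symmetries preserve each class (t ↦ m - t swaps Z+1/4 and Z+3/4). *)
Lemma coord_sym_int t z : coord_sym t z -> is_int t -> is_int z.
Proof.
  intros [m [->| ->]] [k ->]; [exists (k + m)%Z | exists (m - k)%Z]; push_IZR; ring.
Qed.

Lemma coord_sym_half t z : coord_sym t z -> is_half t -> is_half z.
Proof.
  intros [m [->| ->]] [k ->]; [exists (k + m)%Z | exists (m - k - 1)%Z]; push_IZR; simpl; lra.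
Qed.

Lemma coord_sym_quarter t z : coord_sym t z -> is_quarter t -> is_quarter z.
Proof.
  intros [m [->| ->]] [k [->| ->]];
    [exists (k + m)%Z; left | exists (k + m)%Z; right
    | exists (m - k - 1)%Z; right | exists (m - k - 1)%Z; left]; push_IZR; simpl; lra.
Qed.

Lemma coord_sym_sq t z q : coord_sym t z -> exists q', coord_sym q q' /\ (t - q)^2 = (z - q')^2.
Proof.
  intros [m [->| ->]].
  - exists (q + IZR m); split; [exists m; left; ring | ring].
  - exists (IZR m - q); split; [exists m; right; ring | ring].
Qed.

Lemma coord_sym_unitL2 q1 q2 q3 r1 r2 r3 :
  coord_sym q1 r1 -> coord_sym q2 r2 -> coord_sym q3 r3 -> unitL2 q1 q2 q3 -> unitL2 r1 r2 r3.
Proof.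
  intros H1 H2 H3 HQ; destruct_unitL2 HQ;
  repeat match goal with
  | H : is_int ?q, E : coord_sym ?q _ |- _ => apply (coord_sym_int _ _ E) in H
  | H : is_half ?q, E : coord_sym ?q _ |- _ => apply (coord_sym_half _ _ E) in H
  | H : is_quarter ?q, E : coord_sym ?q _ |- _ => apply (coord_sym_quarter _ _ E) in H
  end; unfold unitL2, pattern; tauto.
Qed.

Lemma coord_sym_shifted_sign y z p s : coord_sym y z -> y = p + 5/24*s -> is_sign s ->
  exists p' s', coord_sym p p' /\ is_sign s' /\ z = p' + 5/24*s'.
Proof.
  intros [m [->| ->]] -> Hs.
  - exists (p + IZR m), s; repeat split; auto; [exists m; left; ring | ring].
  - exists (IZR m - p), (-s); repeat split; [exists m; right; ring | | ring].
    destruct Hs; [right | left]; lra.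
Qed.

Lemma coord_sym_unitLambda y1 y2 y3 z1 z2 z3 :
  coord_sym y1 z1 -> coord_sym y2 z2 -> coord_sym y3 z3 ->
  unitLambda y1 y2 y3 -> unitLambda z1 z2 z3.
Proof.
  intros H1 H2 H3 (p1 & p2 & p3 & s1 & s2 & s3 & Hc & S1 & S2 & S3 & E1 & E2 & E3).
  destruct (coord_sym_shifted_sign _ _ _ _ H1 E1 S1) as (p1' & s1' & R1 & T1 & F1).
  destruct (coord_sym_shifted_sign _ _ _ _ H2 E2 S2) as (p2' & s2' & R2 & T2 & F2).
  destruct (coord_sym_shifted_sign _ _ _ _ H3 E3 S3) as (p3' & s3' & R3 & T3 & F3).
  exists p1', p2', p3', s1', s2', s3'; repeat split; auto.
  destruct Hc as [(? & ? & ?)|(? & ? & ?)]; [left | right];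
    eauto 6 using coord_sym_int, coord_sym_half.
Qed.

Lemma unitL2_swap12 q1 q2 q3 : unitL2 q1 q2 q3 -> unitL2 q2 q1 q3.
Proof. unfold unitL2, pattern; tauto. Qed.

Lemma unitL2_swap23 q1 q2 q3 : unitL2 q1 q2 q3 -> unitL2 q1 q3 q2.
Proof. unfold unitL2, pattern; tauto. Qed.

Lemma unitLambda_swap12 y1 y2 y3 : unitLambda y1 y2 y3 -> unitLambda y2 y1 y3.
Proof.
  intros (p1 & p2 & p3 & s1 & s2 & s3 & Hc & H).
  exists p2, p1, p3, s2, s1, s3; tauto.
Qed.

Lemma unitLambda_swap23 y1 y2 y3 : unitLambda y1 y2 y3 -> unitLambda y1 y3 y2.
Proof.
  intros (p1 & p2 & p3 & s1 & s2 & s3 & Hc & H).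
  exists p1, p3, p2, s1, s3, s2; tauto.
Qed.

Definition covering_at (y1 y2 y3 : R) : Prop :=
  (exists q1 q2 q3, unitL2 q1 q2 q3 /\ sqdist y1 y2 y3 q1 q2 q3 <= rho) /\
  ((forall q1 q2 q3, unitL2 q1 q2 q3 -> rho <= sqdist y1 y2 y3 q1 q2 q3) ->
   unitLambda y1 y2 y3).

Definition symmetric_to (y1 y2 y3 z1 z2 z3 : R) : Prop :=
  (forall q1 q2 q3, unitL2 q1 q2 q3 -> exists r1 r2 r3, unitL2 r1 r2 r3 /\
     sqdist y1 y2 y3 r1 r2 r3 = sqdist z1 z2 z3 q1 q2 q3) /\
  (unitLambda z1 z2 z3 -> unitLambda y1 y2 y3).

Lemma covering_transport y1 y2 y3 z1 z2 z3 :
  symmetric_to y1 y2 y3 z1 z2 z3 -> covering_at z1 z2 z3 -> covering_at y1 y2 y3.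
Proof.
  intros [Hdist HLam] [(q1 & q2 & q3 & HQ & Hd) Hfar]; split.
  - destruct (Hdist _ _ _ HQ) as (r1 & r2 & r3 & HR & Er).
    exists r1, r2, r3; split; [exact HR | lra].
  - intros Hall; apply HLam, Hfar; intros r1 r2 r3 HR.
    destruct (Hdist _ _ _ HR) as (u1 & u2 & u3 & HU & Eu).
    specialize (Hall _ _ _ HU); lra.
Qed.

Lemma symmetric_coord y1 y2 y3 z1 z2 z3 :
  coord_sym z1 y1 -> coord_sym z2 y2 -> coord_sym z3 y3 -> symmetric_to y1 y2 y3 z1 z2 z3.
Proof.
  intros H1 H2 H3; split; [| apply coord_sym_unitLambda; assumption].
  intros q1 q2 q3 HQ.
  destruct (coord_sym_sq _ _ q1 H1) as (r1 & R1 & E1).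
  destruct (coord_sym_sq _ _ q2 H2) as (r2 & R2 & E2).
  destruct (coord_sym_sq _ _ q3 H3) as (r3 & R3 & E3).
  exists r1, r2, r3; split; [eapply coord_sym_unitL2; eauto | unfold sqdist; lra].
Qed.

Lemma symmetric_swap12 y1 y2 y3 : symmetric_to y1 y2 y3 y2 y1 y3.
Proof.
  split; [| apply unitLambda_swap12].
  intros q1 q2 q3 HQ; exists q2, q1, q3; split; [apply unitL2_swap12; auto | unfold sqdist; ring].
Qed.

Lemma symmetric_swap23 y1 y2 y3 : symmetric_to y1 y2 y3 y1 y3 y2.
Proof.
  split; [| apply unitLambda_swap23].
  intros q1 q2 q3 HQ; exists q1, q3, q2; split; [apply unitL2_swap23; auto | unfold sqdist; ring].
Qed.

(* The core computation on the fundamental region 0 ≤ y1 ≤ y2 ≤ y3 ≤ 1/2,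
   with the three candidates A = 0, B = (1/2,1/2,1/2), C = (0,1/4,1/2).
   A covers when y2/2 + y3 ≤ 5/16, B when y1 + y2/2 ≥ 7/16, C in between;
   the rho-defects are bounded below by positive multiples of the slacks,
   so equality forces y = (5/24)^3 (near A) or (7/24)^3 (near B), while
   equality near C is impossible. *)
Lemma covering_sorted y1 y2 y3 :
  0 <= y1 -> y1 <= y2 -> y2 <= y3 -> y3 <= /2 -> covering_at y1 y2 y3.
Proof.
  intros h1 h2 h3 h4.
  assert (QA : unitL2 0 0 0) by (left; repeat split; exists 0%Z; reflexivity).
  assert (QB : unitL2 (/2) (/2) (/2))
    by (right; left; repeat split; exists 0%Z; simpl; lra).
  assert (QC : unitL2 0 (/4) (/2)).
  { do 3 right; left; split; [exists 0%Z | split; [exists 0%Z; left | exists 0%Z]]; simpl; lra. }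
  split.
  - destruct (Rle_dec (y2/2 + y3) (5/16)).
    { exists 0, 0, 0; split; auto; unfold sqdist, rho; nra. }
    destruct (Rle_dec (7/16) (y1 + y2/2)).
    { exists (/2), (/2), (/2); split; auto; unfold sqdist, rho; nra. }
    exists 0, (/4), (/2); split; auto; unfold sqdist, rho.
    destruct (Rle_dec (y1 + y2 + y3) (3/4)); nra.
  - intros Hall.
    pose proof (Hall _ _ _ QA) as HA; pose proof (Hall _ _ _ QB) as HB;
      pose proof (Hall _ _ _ QC) as HC; unfold sqdist, rho in HA, HB, HC.
    destruct (Rle_dec (y2/2 + y3) (5/16)).
    { assert (/12 * ((y2-y1) + (y3-y2) + (5/16 - y2/2 - y3))
                <= 75/576 - (y1^2 + y2^2 + y3^2)) by nra.
      exists 0, 0, 0, 1, 1, 1; repeat split; try (left; reflexivity); try lra;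
        left; repeat split; exists 0%Z; reflexivity. }
    destruct (Rle_dec (7/16) (y1 + y2/2)).
    { assert (/12 * ((y2-y1) + (y3-y2) + (y1 + y2/2 - 7/16))
                <= 75/576 - ((y1-/2)^2 + (y2-/2)^2 + (y3-/2)^2)) by nra.
      exists (/2), (/2), (/2), (-1), (-1), (-1); repeat split; try (right; reflexivity);
        try lra; right; repeat split; exists 0%Z; simpl; lra. }
    exfalso.
    destruct (Rle_dec (y1 + y2 + y3) (3/4)).
    { assert (/24 * ((y2-y1) + (y3-y2) + (y2/2 + y3 - 5/16))
                <= 75/576 - (y1^2 + (y2-/4)^2 + (y3-/2)^2)) by nra.
      lra. }
    { assert (/24 * ((y2-y1) + (y3-y2) + (7/16 - y1 - y2/2))
                <= 75/576 - (y1^2 + (y2-/4)^2 + (y3-/2)^2)) by nra.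
      lra. }
Qed.

Lemma covering_cube y1 y2 y3 :
  0 <= y1 <= /2 -> 0 <= y2 <= /2 -> 0 <= y3 <= /2 -> covering_at y1 y2 y3.
Proof.
  intros h1 h2 h3.
  pose proof (fun a b c => covering_transport _ _ _ _ _ _ (symmetric_swap12 a b c)) as S12.
  pose proof (fun a b c => covering_transport _ _ _ _ _ _ (symmetric_swap23 a b c)) as S23.
  destruct (Rle_dec y1 y2); destruct (Rle_dec y2 y3); destruct (Rle_dec y1 y3).
  - apply covering_sorted; lra.
  - apply covering_sorted; lra.
  - apply S23, covering_sorted; lra.
  - apply S23, S12, covering_sorted; lra.
  - apply S12, covering_sorted; lra.
  - apply S12, S23, covering_sorted; lra.
  - apply S12, S23, S12, covering_sorted; lra.
  - apply S12, S23, S12, covering_sorted; lra.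
Qed.

Lemma coord_fold t : exists z, 0 <= z <= /2 /\ coord_sym z t.
Proof.
  destruct (int_within_half t) as [j Hj].
  destruct (Rle_dec 0 (t - IZR j)).
  - exists (t - IZR j); split; [lra | exists j; left; ring].
  - exists (IZR j - t); split; [lra | exists j; right; ring].
Qed.

Lemma covering_everywhere y1 y2 y3 : covering_at y1 y2 y3.
Proof.
  destruct (coord_fold y1) as (z1 & B1 & R1).
  destruct (coord_fold y2) as (z2 & B2 & R2).
  destruct (coord_fold y3) as (z3 & B3 & R3).
  apply (covering_transport _ _ _ z1 z2 z3); [apply symmetric_coord; auto |].
  apply covering_cube; auto.
Qed.

(* Lower bounds on one coordinate of a point of Λ against each class:
   the difference lies in Z + c for an explicit c, and gap_sq_ge applies
   with a nearest integer k - m + j, j ∈ {0, 1, -1}. *)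
Ltac int_gap k m :=
  first [ apply (gap_sq_ge _ _ (k - m)); push_IZR; simpl; [lra | nra]
        | apply (gap_sq_ge _ _ (k - m + 1)); push_IZR; simpl; [lra | nra]
        | apply (gap_sq_ge _ _ (k - m - 1)); push_IZR; simpl; [lra | nra] ].

Lemma coord_gap_int p s q : is_int p -> is_sign s ->
  (is_int q -> 25/576 <= (p + 5/24*s - q)^2) /\
  (is_half q -> 49/576 <= (p + 5/24*s - q)^2) /\
  (is_quarter q -> 1/576 <= (p + 5/24*s - q)^2).
Proof.
  intros [k ->] Hs; repeat split; [intros [m ->] | intros [m ->] | intros [m [->| ->]]];
    destruct Hs as [-> | ->]; int_gap k m.
Qed.

Lemma coord_gap_half p s q : is_half p -> is_sign s ->
  (is_int q -> 49/576 <= (p + 5/24*s - q)^2) /\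
  (is_half q -> 25/576 <= (p + 5/24*s - q)^2) /\
  (is_quarter q -> 1/576 <= (p + 5/24*s - q)^2).
Proof.
  intros [k ->] Hs; repeat split; [intros [m ->] | intros [m ->] | intros [m [->| ->]]];
    destruct Hs as [-> | ->]; int_gap k m.
Qed.

(* Points of Λ are at squared distance at least rho from Q: summing the
   coordinate bounds over each of the eight class patterns gives ≥ 75/576. *)
Lemma unitLambda_far y1 y2 y3 q1 q2 q3 :
  unitLambda y1 y2 y3 -> unitL2 q1 q2 q3 -> rho <= sqdist y1 y2 y3 q1 q2 q3.
Proof.
  intros (p1 & p2 & p3 & s1 & s2 & s3 & Hc & S1 & S2 & S3 & -> & -> & ->) HQ.
  unfold sqdist, rho.
  destruct Hc as [(c1 & c2 & c3) | (c1 & c2 & c3)];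
  [ destruct (coord_gap_int p1 s1 q1 c1 S1) as (a1 & b1 & d1);
    destruct (coord_gap_int p2 s2 q2 c2 S2) as (a2 & b2 & d2);
    destruct (coord_gap_int p3 s3 q3 c3 S3) as (a3 & b3 & d3)
  | destruct (coord_gap_half p1 s1 q1 c1 S1) as (a1 & b1 & d1);
    destruct (coord_gap_half p2 s2 q2 c2 S2) as (a2 & b2 & d2);
    destruct (coord_gap_half p3 s3 q3 c3 S3) as (a3 & b3 & d3) ];
  destruct_unitL2 HQ;
  repeat match goal with H : ?X ?q, G : ?X ?q -> _ |- _ => specialize (G H) end; lra.
Qed.

Definition nearest_in (X : R -> Prop) (t : R) : Prop :=
  exists q, X q /\ forall q', X q' -> (t - q)^2 <= (t - q')^2.

Lemma nearest_int t : nearest_in is_int t.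
Proof.
  destruct (int_within_half t) as [j Hj]; exists (IZR j); split; [exists j; reflexivity |].
  intros q' [n ->]; apply nearest_int_sq; exact Hj.
Qed.

Lemma nearest_half t : nearest_in is_half t.
Proof.
  destruct (int_within_half (t - /2)) as [j Hj].
  exists (IZR j + /2); split; [exists j; reflexivity |].
  intros q' [n ->]; pose proof (nearest_int_sq _ j n Hj).
  replace (t - (IZR j + /2)) with (t - /2 - IZR j) by ring.
  replace (t - (IZR n + /2)) with (t - /2 - IZR n) by ring; assumption.
Qed.

(* The quarter class is (1/2)Z + 1/4, so use a nearest integer to 2t - 1/2. *)
Lemma nearest_quarter t : nearest_in is_quarter t.
Proof.
  destruct (int_within_half (2*t - /2)) as [j Hj].
  pose proof (nearest_int_sq (2*t - /2) j) as Hk.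
  exists (IZR j / 2 + /4); split.
  - destruct (Z.Even_or_Odd j) as [[i ->]|[i ->]]; exists i; [left | right];
      push_IZR; simpl; lra.
  - intros q' [n [-> | ->]].
    + specialize (Hk (2*n)%Z Hj); rewrite mult_IZR in Hk; simpl in Hk; nra.
    + specialize (Hk (2*n+1)%Z Hj); rewrite plus_IZR, mult_IZR in Hk; simpl in Hk; nra.
Qed.

Definition min_on (P : R -> R -> R -> Prop) (y1 y2 y3 : R) : Prop :=
  exists q1 q2 q3, P q1 q2 q3 /\
    forall r1 r2 r3, P r1 r2 r3 -> sqdist y1 y2 y3 q1 q2 q3 <= sqdist y1 y2 y3 r1 r2 r3.

Lemma min_on_union (P P' : R -> R -> R -> Prop) y1 y2 y3 :
  min_on P y1 y2 y3 -> min_on P' y1 y2 y3 ->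
  min_on (fun a b c => P a b c \/ P' a b c) y1 y2 y3.
Proof.
  intros (q1 & q2 & q3 & HP & HPm) (u1 & u2 & u3 & HP' & HPm').
  destruct (Rle_dec (sqdist y1 y2 y3 q1 q2 q3) (sqdist y1 y2 y3 u1 u2 u3)).
  - exists q1, q2, q3; split; [auto |].
    intros r1 r2 r3 [H|H]; [auto | specialize (HPm' _ _ _ H); lra].
  - exists u1, u2, u3; split; [auto |].
    intros r1 r2 r3 [H|H]; [specialize (HPm _ _ _ H); lra | auto].
Qed.

Lemma min_on_pattern X1 X2 X3 y1 y2 y3 :
  nearest_in X1 y1 -> nearest_in X2 y2 -> nearest_in X3 y3 -> min_on (pattern X1 X2 X3) y1 y2 y3.
Proof.
  intros (q1 & A1 & B1) (q2 & A2 & B2) (q3 & A3 & B3).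
  exists q1, q2, q3; split; [repeat split; auto |].
  intros r1 r2 r3 (C1 & C2 & C3); unfold sqdist.
  specialize (B1 _ C1); specialize (B2 _ C2); specialize (B3 _ C3); lra.
Qed.

Lemma min_on_unitL2 y1 y2 y3 : min_on unitL2 y1 y2 y3.
Proof.
  unfold unitL2; repeat apply min_on_union; apply min_on_pattern;
    auto using nearest_int, nearest_half, nearest_quarter.
Qed.

Lemma int_between (k : Z) (lo : R) : lo < IZR k < lo + 1 -> -1 <= lo < 0 -> k = 0%Z.
Proof.
  intros [H1 H2] Hlo.
  assert (-1 < IZR k < 1) by lra. destruct H as [H3 H4].
  apply lt_IZR in H3; apply lt_IZR in H4; lia.
Qed.

Lemma close_coord q : (5/24 - q)^2 <= rho ->
  (is_int q -> q = 0) /\ (is_half q -> q = /2) /\ (is_quarter q -> q = /4).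
Proof.
  unfold rho; intros H.
  assert (Hq : -1/6 < q < 7/12) by nra.
  repeat split.
  - intros [k ->]; rewrite (int_between k (-1/6)); [reflexivity | lra | lra].
  - intros [k ->]; rewrite (int_between k (-2/3)); simpl; lra.
  - intros [k [-> | ->]].
    + rewrite (int_between k (-5/12)); simpl; lra.
    + pose proof (int_between k (-11/12) ltac:(lra) ltac:(lra)); subst; simpl in Hq; lra.
Qed.

Definition example_points (q1 q2 q3 : R) : Prop :=
  (q1 = 0 /\ q2 = 0 /\ q3 = 0) \/ (q1 = 0 /\ q2 = /4 /\ q3 = /2) \/
  (q1 = 0 /\ q2 = /2 /\ q3 = /4) \/ (q1 = /4 /\ q2 = /2 /\ q3 = 0) \/
  (q1 = /2 /\ q2 = /4 /\ q3 = 0) \/ (q1 = /4 /\ q2 = 0 /\ q3 = /2) \/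
  (q1 = /2 /\ q2 = 0 /\ q3 = /4).

Lemma example_unit q1 q2 q3 :
  unitL2 q1 q2 q3 /\ sqdist (5/24) (5/24) (5/24) q1 q2 q3 = rho <-> example_points q1 q2 q3.
Proof.
  split.
  - intros [HQ Hs]; unfold sqdist in Hs.
    pose proof (pow2_ge_0 (5/24 - q1)); pose proof (pow2_ge_0 (5/24 - q2));
      pose proof (pow2_ge_0 (5/24 - q3)).
    destruct (close_coord q1) as (I1 & J1 & F1); [lra |].
    destruct (close_coord q2) as (I2 & J2 & F2); [lra |].
    destruct (close_coord q3) as (I3 & J3 & F3); [lra |].
    unfold example_points; destruct_unitL2 HQ;
    repeat match goal with H : ?X ?q, G : ?X ?q -> _ |- _ => specialize (G H) end;
    subst; unfold rho in Hs; lra || tauto.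
  - assert (I : is_int 0) by (exists 0%Z; reflexivity).
    assert (H : is_half (/2)) by (exists 0%Z; simpl; lra).
    assert (F : is_quarter (/4)) by (exists 0%Z; left; simpl; lra).
    unfold example_points, unitL2, pattern, sqdist, rho;
      intros Hq; decompose [or and] Hq; subst; split; (tauto || field).
Qed.

Lemma setW_point a x y z u1 u2 u3 : is_int x -> is_half y -> is_quarter z ->
  is_perm3 u1 u2 u3 x y z -> setW a (a*u1, a*u2, a*u3).
Proof.
  intros [i ->] [j ->] [k Hk] Hp.
  destruct Hk as [-> | ->]; exists u1, u2, u3, i, j, k; eexists; split;
    [left; reflexivity | split; [exact Hp | reflexivity]
    | right; reflexivity | split; [exact Hp | reflexivity]].
Qed.

Lemma L2_unit a p :
  L2 a p <-> exists q1 q2 q3, unitL2 q1 q2 q3 /\ p = (a*q1, a*q2, a*q3).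
Proof.
  split.
  - intros [(i & j & k & H) | [(i & j & k & H) | (u1 & u2 & u3 & i & j & k & eps & He & Hp & H)]].
    + exists (IZR i), (IZR j), (IZR k); split; [left; repeat split; eexists; reflexivity | exact H].
    + exists (IZR i + /2), (IZR j + /2), (IZR k + /2); split;
        [right; left; repeat split; eexists; reflexivity | exact H].
    + exists u1, u2, u3; split; [| exact H].
      assert (is_int (IZR i)) by (eexists; reflexivity).
      assert (is_half (IZR j + /2)) by (eexists; reflexivity).
      assert (is_quarter (IZR k + eps)) by (destruct He; subst; exists k; tauto).
      unfold is_perm3 in Hp; unfold unitL2, pattern.
      decompose [or and] Hp; subst; tauto.
  - intros (q1 & q2 & q3 & HQ & ->); destruct_unitL2 HQ;
    [ left | right; left | .. ];
    repeat match goal with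
    | H : is_int _ |- latZ3 _ _ => destruct H as [? ->]
    | H : is_half _ |- latZ3half _ _ => destruct H as [? ->]
    end;
    [ do 3 eexists; reflexivity | do 3 eexists; reflexivity | .. ];
    right; right; (eapply setW_point; [eassumption .. | unfold is_perm3; tauto]).
Qed.

Lemma dist_scaled a x1 x2 x3 q1 q2 q3 : 0 < a ->
  dist3 (x1, x2, x3) (a*q1, a*q2, a*q3) = sqrt (a^2 * sqdist (x1/a) (x2/a) (x3/a) q1 q2 q3).
Proof. intros ha; unfold dist3, sqdist; f_equal; field; lra. Qed.

Lemma radius_scaled a : 0 < a -> 5 * sqrt 3 / 24 * a = sqrt (a^2 * rho).
Proof.
  intros ha. pose proof (sqrt_pos 3). pose proof (sqrt_sqrt 3 ltac:(lra)).
  replace (a^2 * rho) with ((5 * sqrt 3 / 24 * a)^2) by (unfold rho; nra).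
  rewrite sqrt_pow2; [reflexivity | nra].
Qed.

Lemma sqrt_scaled_le a s t : 0 < a -> 0 <= s -> 0 <= t ->
  (sqrt (a^2 * s) <= sqrt (a^2 * t) <-> s <= t).
Proof.
  intros ha hs ht. assert (0 < a^2) by nra. split; intros Hle.
  - apply sqrt_le_0 in Hle; nra.
  - apply sqrt_le_1_alt; nra.
Qed.

Lemma pt_ext (x1 x2 x3 y1 y2 y3 : R) :
  x1 = y1 -> x2 = y2 -> x3 = y3 -> (x1, x2, x3) = (y1, y2, y3).
Proof. intros -> -> ->; reflexivity. Qed.

Lemma pt_scaled a x1 x2 x3 : 0 < a -> (x1, x2, x3) = (a*(x1/a), a*(x2/a), a*(x3/a)).
Proof. intros ha; apply pt_ext; field; lra. Qed.

Lemma Lambda_unit a x1 x2 x3 : 0 < a -> Lambda a (x1, x2, x3) <-> unitLambda (x1/a) (x2/a) (x3/a).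
Proof.
  intros ha; split.
  - intros (p1 & p2 & p3 & s1 & s2 & s3 & Hc & S1 & S2 & S3 & Hx).
    injection Hx as -> -> ->.
    destruct Hc as [(i & j & k & H) | (i & j & k & H)]; injection H as -> -> ->;
      [exists (IZR i), (IZR j), (IZR k) | exists (IZR i + /2), (IZR j + /2), (IZR k + /2)];
      exists s1, s2, s3; repeat split; auto; try (field; lra);
      [left | right]; repeat split; eexists; reflexivity.
  - intros (p1 & p2 & p3 & s1 & s2 & s3 & Hc & S1 & S2 & S3 & E1 & E2 & E3).
    exists (a*p1), (a*p2), (a*p3), s1, s2, s3; split; [| repeat split; auto].
    + destruct Hc as [([i ->] & [j ->] & [k ->]) | ([i ->] & [j ->] & [k ->])];
        [left | right]; exists i, j, k; reflexivity.
    + rewrite (pt_scaled a x1 x2 x3 ha), E1, E2, E3; apply pt_ext; field.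
Qed.

Lemma min_dist_exists a x : 0 < a -> exists d, is_min_dist a x d.
Proof.
  intros ha; destruct x as [[x1 x2] x3].
  destruct (min_on_unitL2 (x1/a) (x2/a) (x3/a)) as (q1 & q2 & q3 & HQ & Hm).
  exists (sqrt (a^2 * sqdist (x1/a) (x2/a) (x3/a) q1 q2 q3)); split.
  - exists (a*q1, a*q2, a*q3); split; [apply L2_unit; eauto | apply dist_scaled; auto].
  - intros p Hp; apply L2_unit in Hp; destruct Hp as (r1 & r2 & r3 & HR & ->).
    rewrite dist_scaled by auto; apply sqrt_scaled_le; auto using sqdist_ge0.
Qed.

Lemma min_dist_le_unit a x1 x2 x3 d q1 q2 q3 : 0 < a -> is_min_dist a (x1, x2, x3) d ->
  unitL2 q1 q2 q3 -> d <= sqrt (a^2 * sqdist (x1/a) (x2/a) (x3/a) q1 q2 q3).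
Proof.
  intros ha [_ H] HQ; rewrite <- dist_scaled by auto; apply H, L2_unit; eauto.
Qed.

Lemma min_dist_le_radius a x d : 0 < a -> is_min_dist a x d -> d <= 5 * sqrt 3 / 24 * a.
Proof.
  intros ha H; destruct x as [[x1 x2] x3].
  destruct (covering_everywhere (x1/a) (x2/a) (x3/a)) as [(q1 & q2 & q3 & HQ & Hd) _].
  eapply Rle_trans; [exact (min_dist_le_unit _ _ _ _ _ _ _ _ ha H HQ) |].
  rewrite radius_scaled by auto; apply sqrt_scaled_le; auto using sqdist_ge0.
  unfold rho; lra.
Qed.

Lemma Lambda_attains a x : 0 < a -> Lambda a x -> is_min_dist a x (5 * sqrt 3 / 24 * a).
Proof.
  intros ha HL; destruct x as [[x1 x2] x3]; apply Lambda_unit in HL; auto.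
  destruct (covering_everywhere (x1/a) (x2/a) (x3/a)) as [(q1 & q2 & q3 & HQ & Hd) _].
  pose proof (unitLambda_far _ _ _ _ _ _ HL HQ).
  rewrite radius_scaled by auto; split.
  - exists (a*q1, a*q2, a*q3); split; [apply L2_unit; eauto |].
    rewrite dist_scaled by auto; do 2 f_equal; lra.
  - intros p Hp; apply L2_unit in Hp; destruct Hp as (r1 & r2 & r3 & HR & ->).
    rewrite dist_scaled by auto; apply sqrt_scaled_le; auto using sqdist_ge0.
    + unfold rho; lra.
    + apply unitLambda_far; auto.
Qed.

Lemma attains_Lambda a x : 0 < a -> is_min_dist a x (5 * sqrt 3 / 24 * a) -> Lambda a x.
Proof.
  intros ha H; destruct x as [[x1 x2] x3]; apply Lambda_unit; auto.
  apply (covering_everywhere (x1/a) (x2/a) (x3/a)); intros q1 q2 q3 HQ.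
  pose proof (min_dist_le_unit _ _ _ _ _ _ _ _ ha H HQ) as L.
  rewrite radius_scaled in L by auto; apply sqrt_scaled_le in L; auto using sqdist_ge0.
  unfold rho; lra.
Qed.

Lemma example_scaled a p : 0 < a ->
  L2 a p /\ dist3 (mkpt (5 * a / 24) (5 * a / 24) (5 * a / 24)) p = 5 * sqrt 3 / 24 * a <->
  exists q1 q2 q3, example_points q1 q2 q3 /\ p = (a*q1, a*q2, a*q3).
Proof.
  intros ha; rewrite L2_unit.
  assert (Hc : forall q1 q2 q3,
      dist3 (mkpt (5 * a / 24) (5 * a / 24) (5 * a / 24)) (a*q1, a*q2, a*q3)
      = 5 * sqrt 3 / 24 * a <-> sqdist (5/24) (5/24) (5/24) q1 q2 q3 = rho).
  { intros q1 q2 q3; unfold mkpt; rewrite dist_scaled, radius_scaled by auto.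
    replace (5 * a / 24 / a) with (5/24) by (field; lra).
    pose proof (sqdist_ge0 (5/24) (5/24) (5/24) q1 q2 q3); unfold rho in *.
    split; intros E.
    - apply sqrt_inj in E; [| nra | nra].
      apply Rmult_eq_reg_l with (a^2); [exact E | nra].
    - rewrite E; reflexivity. }
  split.
  - intros [(q1 & q2 & q3 & HQ & ->) Hd]; apply Hc in Hd.
    exists q1, q2, q3; split; [apply example_unit; auto | reflexivity].
  - intros (q1 & q2 & q3 & Hq & ->); apply example_unit in Hq as [HQ Hs].
    split; [exists q1, q2, q3; auto | apply Hc; exact Hs].
Qed.

Theorem mainTheorem5 (a : R) (ha : 0 < a) :
  (* the minimum over L2 exists at every point *)
  (forall x : pt, exists d, is_min_dist a x d) /\
  (* sup_x min_{p in L2} |x - p| = 5 sqrt 3 / 24 * a *)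
  is_lub (fun d => exists x : pt, is_min_dist a x d) (5 * sqrt 3 / 24 * a) /\
  (* the supremum is attained exactly on Lambda *)
  (forall x : pt, is_min_dist a x (5 * sqrt 3 / 24 * a) <-> Lambda a x) /\
  (* example: the nearest points of (5a/24,5a/24,5a/24) in L2 *)
  (forall p : pt,
     L2 a p /\ dist3 (mkpt (5 * a / 24) (5 * a / 24) (5 * a / 24)) p
               = 5 * sqrt 3 / 24 * a
     <->
     p = mkpt 0 0 0 \/
     p = mkpt 0 (a / 4) (a / 2) \/
     p = mkpt 0 (a / 2) (a / 4) \/
     p = mkpt (a / 4) (a / 2) 0 \/
     p = mkpt (a / 2) (a / 4) 0 \/
     p = mkpt (a / 4) 0 (a / 2) \/
     p = mkpt (a / 2) 0 (a / 4)).
Proof.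
  split; [| split; [| split]].
  - intros x; apply min_dist_exists, ha.
  - split.
    + intros d [x H]; exact (min_dist_le_radius a x d ha H).
    + intros b Hb; apply Hb; exists (mkpt (5 * a / 24) (5 * a / 24) (5 * a / 24)).
      apply Lambda_attains; [exact ha |].
      apply Lambda_unit; [exact ha |]; exists 0, 0, 0, 1, 1, 1.
      repeat split; try (left; reflexivity); try (field; lra);
        left; repeat split; exists 0%Z; reflexivity.
  - intros x; split; [apply attains_Lambda | apply Lambda_attains]; exact ha.
  - intros p; rewrite example_scaled by exact ha; unfold example_points, mkpt; split.
    + intros (q1 & q2 & q3 & Hq & ->); decompose [or and] Hq; subst;
        repeat (solve [left; apply pt_ext; field] || right); apply pt_ext; field.
    + intros [-> | [-> | [-> | [-> | [-> | [-> | ->]]]]]];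
        [exists 0, 0, 0 | exists 0, (/4), (/2) | exists 0, (/2), (/4) | exists (/4), (/2), 0
        | exists (/2), (/4), 0 | exists (/4), 0, (/2) | exists (/2), 0, (/4)];
        (split; [tauto | apply pt_ext; field]).
Qed.
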